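(* There is a finitely generated infinite group $G$ and a Cayley graph $\mathrm{Cay}(G;S)$ of $G$ (with $S$ a finite generating set) which does not have any regular spanning tree.
   Context: $\mathrm{Cay}(G;S)$ has vertex set $G$, with $g$ adjacent to $gs$ for $s\in S\cup S^{-1}$. A regular spanning tree is a subgraph that is a tree containing every vertex, in which all vertices have the same degree. *)

From Stdlib Require Import List Relations.
Import ListNotations.

Record group := Group {
  gcar :> Type;
  gmul : gcar -> gcar -> gcar;
  ginv : gcar -> gcar;
  gone : gcar;
  gmulA : forall x y z, gmul x (gmul y z) = gmul (gmul x y) z;
  gmul1 : forall x, gmul gone x = x;
  gmulV : forall x, gmul (ginv x) x = gone
}.

Definition infinite_group (G : group) : Prop :=
  ~ exists l : list G, forall x : G, In x l.

Definition word_prod (G : group) (w : list G) : G :=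
  fold_right (gmul G) (gone G) w.

Definition generates (G : group) (S : list G) : Prop :=
  forall g : G, exists w : list G,
    (forall x, In x w -> exists s, In s S /\ (x = s \/ x = ginv G s)) /\
    g = word_prod G w.

Definition cay_adj (G : group) (S : list G) (g h : G) : Prop :=
  exists s, In s S /\ (h = gmul G g s \/ h = gmul G g (ginv G s)).

Fixpoint walk {V : Type} (E : V -> V -> Prop) (x : V) (l : list V) : Prop :=
  match l with
  | [] => True
  | y :: l' => E x y /\ walk E y l'
  end.

Definition has_cycle {V : Type} (E : V -> V -> Prop) : Prop :=
  exists (x0 : V) (xs : list V),
    NoDup (x0 :: xs) /\ 2 <= length xs /\ walk E x0 xs /\ E (last xs x0) x0.

Definition connected {V : Type} (E : V -> V -> Prop) : Prop :=
  forall x y : V, clos_refl_trans V E x y.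

Definition is_tree {V : Type} (E : V -> V -> Prop) : Prop :=
  (forall x y, E x y -> E y x) /\ (forall x, ~ E x x) /\
  connected E /\ ~ has_cycle E.

Definition has_degree {V : Type} (E : V -> V -> Prop) (x : V) (d : nat) : Prop :=
  exists l : list V, NoDup l /\ length l = d /\ (forall y, In y l <-> E x y).

Definition regular_spanning_tree {V : Type} (A E : V -> V -> Prop) : Prop :=
  (forall x y, E x y -> A x y) /\ is_tree E /\
  exists d : nat, forall x, has_degree E x d.

(* The group is Z/2 * Z/3 = <a, b | a^2, b^3>, with S = {a, b}.  Its Cayley
   graph is cubic: every vertex v lies on the triangle v, vb, vb^-1 and on
   the edge v -- va, and every such a-edge is a bridge (the elements whose
   normal form extends that of va lie on one side of it).  A regular spanning
   tree therefore has degree at most 3 and contains every a-edge.  Degree 3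
   would take in whole triangles, degree at most 1 leaves the tree too small,
   and degree 2 would give each vertex of a triangle exactly one of the three
   triangle edges, i.e. a perfect matching of three vertices. *)
From Stdlib Require Import List Relations Lia Classical Eqdep_dec Bool.
Import ListNotations.

(** * Normal forms in Z/2 * Z/3 *)

(* [B'] stands for b^-1.  A word is stored reversed, its last letter at the
   head of the list, so that right multiplication acts at the head. *)
Inductive letter := A | B | B'.

Definition alternating (x y : letter) : bool :=
  match x, y with
  | A, A => false
  | A, _ | _, A => true
  | _, _ => false
  end.

Fixpoint reduced (w : list letter) : bool :=
  match w with
  | x :: (y :: _) as w' => alternating x y && reduced w'
  | _ => true
  end.

Definition mul_letter (l : letter) (w : list letter) : list letter :=
  match l, w with
  | A, A :: w' => w'
  | A, _ => A :: w
  | B, B :: w' => B' :: w'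
  | B, B' :: w' => w'
  | B, _ => B :: w
  | B', B :: w' => w'
  | B', B' :: w' => B :: w'
  | B', _ => B' :: w
  end.
Arguments mul_letter l w : simpl nomatch.

Definition mul_nf (z w : list letter) : list letter := fold_right mul_letter z w.

Definition inv_letter (l : letter) : letter :=
  match l with A => A | B => B' | B' => B end.

Definition inv_nf (w : list letter) : list letter := rev (map inv_letter w).

Lemma reduced_tail l w : reduced (l :: w) = true -> reduced w = true.
Proof. destruct w; simpl; [auto | now intros [_ ?]%andb_prop]. Qed.

Lemma reduced_mul_letter l w : reduced w = true -> reduced (mul_letter l w) = true.
Proof.
  destruct l, w as [|x [|y w]]; try destruct x; try destruct y; simpl; try easy;
    rewrite ?andb_true_iff; tauto.
Qed.

Lemma reduced_mul_nf z w : reduced z = true -> reduced (mul_nf z w) = true.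
Proof. induction w; simpl; auto using reduced_mul_letter. Qed.

Lemma reduced_mul_letter_id l w : reduced (l :: w) = true -> mul_letter l w = l :: w.
Proof. destruct l, w as [|x w]; try destruct x; simpl; auto; discriminate. Qed.

Lemma mul_letter_relations z : reduced z = true ->
  mul_letter A (mul_letter A z) = z /\
  mul_letter B (mul_letter B' z) = z /\ mul_letter B' (mul_letter B z) = z /\
  mul_letter B (mul_letter B z) = mul_letter B' z /\
  mul_letter B' (mul_letter B' z) = mul_letter B z.
Proof.
  destruct z as [|x [|y z]]; try destruct x; try destruct y; simpl;
    intuition discriminate.
Qed.

Lemma mul_nf_mul_letter z l w : reduced z = true ->
  mul_nf z (mul_letter l w) = mul_letter l (mul_nf z w).
Proof.
  intros Hz; destruct l, w as [|x w]; try destruct x; simpl; try reflexivity;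
    destruct (mul_letter_relations _ (reduced_mul_nf z w Hz)) as (?&?&?&?&?);
    congruence.
Qed.

Lemma mul_nfA z y w : reduced z = true ->
  mul_nf z (mul_nf y w) = mul_nf (mul_nf z y) w.
Proof.
  intros Hz; induction w as [|l w IH]; simpl; auto.
  now rewrite mul_nf_mul_letter, IH.
Qed.

Lemma mul_nil_nf w : reduced w = true -> mul_nf [] w = w.
Proof.
  induction w as [|l w IH]; simpl; auto; intros Hw.
  rewrite IH by eauto using reduced_tail; now apply reduced_mul_letter_id.
Qed.

Lemma mul_nf_app z u w : mul_nf z (u ++ w) = mul_nf (mul_nf z w) u.
Proof. apply fold_right_app. Qed.

Lemma mul_nf_inv_r z w : reduced z = true -> mul_nf z (w ++ inv_nf w) = z.
Proof.
  revert z; induction w as [|l w IH]; intros z Hz; simpl; auto.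
  unfold inv_nf; simpl; rewrite app_assoc; fold (inv_nf w).
  rewrite mul_nf_app; simpl; rewrite IH by now apply reduced_mul_letter.
  pose proof (mul_letter_relations _ Hz); destruct l; simpl; tauto.
Qed.

Definition nf := {w : list letter | reduced w = true}.

Lemma nf_eq (x y : nf) : proj1_sig x = proj1_sig y -> x = y.
Proof.
  destruct x as [x Hx], y as [y Hy]; simpl; intros ->.
  f_equal; apply UIP_dec, bool_dec.
Qed.

Definition nf_mul (x y : nf) : nf :=
  exist _ (mul_nf (proj1_sig x) (proj1_sig y)) (reduced_mul_nf _ _ (proj2_sig x)).
Definition nf_inv (x : nf) : nf :=
  exist _ (mul_nf [] (inv_nf (proj1_sig x))) (reduced_mul_nf [] _ eq_refl).
Definition nf_one : nf := exist _ [] eq_refl.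

Lemma nf_mulA x y z : nf_mul x (nf_mul y z) = nf_mul (nf_mul x y) z.
Proof. apply nf_eq, mul_nfA, proj2_sig. Qed.

Lemma nf_mul1 x : nf_mul nf_one x = x.
Proof. apply nf_eq, mul_nil_nf, proj2_sig. Qed.

Lemma nf_mulV x : nf_mul (nf_inv x) x = nf_one.
Proof. apply nf_eq; simpl; rewrite <- mul_nf_app; now apply mul_nf_inv_r. Qed.

Definition Z2Z3 : group := Group nf nf_mul nf_inv nf_one nf_mulA nf_mul1 nf_mulV.

Definition letter_nf (l : letter) : nf := exist _ [l] eq_refl.

Definition gens : list Z2Z3 := [letter_nf A; letter_nf B].

Fixpoint power_ba (n : nat) : list letter :=
  match n with 0 => [] | S n => B :: A :: power_ba n end.

Lemma reduced_power_ba n : reduced (power_ba n) = true.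
Proof. induction n as [|[|n] IH]; auto. Qed.

Lemma length_power_ba n : length (power_ba n) = 2 * n.
Proof. induction n; simpl; lia. Qed.

Lemma Z2Z3_infinite : infinite_group Z2Z3.
Proof.
  intros [l Hl].
  set (M := list_max (map (fun x : nf => length (proj1_sig x)) l)).
  set (x := exist _ (power_ba (S M)) (reduced_power_ba (S M)) : nf).
  assert (Hx : length (proj1_sig x) <= M).
  { assert (HM : Forall (fun k => k <= M) (map (fun x : nf => length (proj1_sig x)) l))
      by now apply list_max_le.
    rewrite Forall_forall in HM; apply HM, (in_map (fun x : nf => length (proj1_sig x))), Hl. }
  simpl in Hx; rewrite length_power_ba in Hx; lia.
Qed.

Lemma word_prod_app (u w : list Z2Z3) :
  word_prod Z2Z3 (u ++ w) = nf_mul (word_prod Z2Z3 u) (word_prod Z2Z3 w).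
Proof.
  induction u as [|x u IH]; simpl; [symmetry; apply nf_mul1|].
  change (nf_mul x (word_prod Z2Z3 (u ++ w))
          = nf_mul (nf_mul x (word_prod Z2Z3 u)) (word_prod Z2Z3 w)).
  rewrite IH; apply nf_mulA.
Qed.

Definition letter_gen (l : letter) : nf :=
  match l with A => letter_nf A | B => letter_nf B | B' => nf_inv (letter_nf B) end.

Lemma Z2Z3_generated : generates Z2Z3 gens.
Proof.
  intros [w Hw]; revert Hw; induction w as [|l w IH]; intros Hw.
  - exists []; split; [simpl; tauto | now apply nf_eq].
  - destruct (IH (reduced_tail _ _ Hw)) as (u & Hu & Hwu).
    exists (u ++ [letter_gen l]); split.
    + intros x [Hx | [<- | []]]%in_app_or; auto.
      destruct l; [exists (letter_nf A) | exists (letter_nf B) | exists (letter_nf B)];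
        simpl; tauto.
    + rewrite word_prod_app, <- Hwu; apply nf_eq; simpl.
      rewrite <- (reduced_mul_letter_id _ _ Hw); now destruct l.
Qed.

Section Graphs.
Context {V : Type} (E : V -> V -> Prop).

Lemma reach_closed (Q : V -> Prop) x y :
  (forall u w, E u w -> Q u -> Q w) -> clos_refl_trans V E x y -> Q x -> Q y.
Proof. intros HQ H; induction H; eauto. Qed.

Lemma cut_edge (Q : V -> Prop) u v x y :
  connected E -> Q x -> ~ Q y ->
  (forall x' y', E x' y' -> Q x' -> ~ Q y' -> x' = u /\ y' = v) -> E u v.
Proof.
  intros Hcon Hx Hy Hcut; apply NNPP; intros Huv; apply Hy.
  apply (reach_closed Q x y); auto.
  intros x' y' Hxy Hx'; apply NNPP; intros Hy'.
  destruct (Hcut x' y' Hxy Hx' Hy'); subst; contradiction.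
Qed.

Lemma has_degree_le v d l :
  has_degree E v d -> (forall y, E v y -> In y l) -> d <= length l.
Proof.
  intros (m & Hm & <- & Hiff) Hl; apply NoDup_incl_length; auto.
  intros y Hy; now apply Hl, Hiff.
Qed.

Lemma has_degree_ge v d l :
  has_degree E v d -> NoDup l -> (forall y, In y l -> E v y) -> length l <= d.
Proof.
  intros (m & _ & <- & Hiff) Hl Hlv; apply NoDup_incl_length; auto.
  intros y Hy; now apply Hiff, Hlv.
Qed.

Lemma has_degree_full v l :
  has_degree E v (length l) -> NoDup l -> (forall y, E v y -> In y l) ->
  forall y, In y l -> E v y.
Proof.
  intros (m & Hm & Hlen & Hiff) Hl Hvl y Hy; apply Hiff.
  apply (@NoDup_length_incl _ m l); auto; [lia | intros z Hz; now apply Hvl, Hiff].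
Qed.

Lemma connected_degree_le1 d : (forall x y, E x y -> E y x) -> connected E ->
  (forall x, has_degree E x d) -> d <= 1 -> forall x y z : V, x = y \/ x = z \/ y = z.
Proof.
  intros Hsym Hcon Hd Hd1.
  assert (Huniq : forall v y z, E v y -> E v z -> y = z).
  { intros v y z Hy Hz; apply NNPP; intros Hyz.
    enough (length [y; z] <= d) by (simpl in *; lia).
    apply (has_degree_ge v); [apply Hd | | simpl; intuition congruence].
    constructor; [simpl; intuition | constructor; [simpl; tauto | constructor]]. }
  intros x y z.
  assert (Hreach : forall t, clos_refl_trans V E x t -> t = x \/ E x t).
  { intros t Ht; apply (reach_closed (fun t => t = x \/ E x t) x t); auto.
    intros u w Huw [-> | Hxu]; [now right | left; eauto]. }
  destruct (Hreach y (Hcon x y)) as [-> | Hy]; auto.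
  destruct (Hreach z (Hcon x z)) as [-> | Hz]; eauto.
Qed.

End Graphs.

Definition rmul (v : nf) (l : letter) : nf := nf_mul v (letter_nf l).

Lemma cay_adj_rmul v y :
  cay_adj Z2Z3 gens v y -> In y [rmul v A; rmul v B; rmul v B'].
Proof.
  intros (s & [<- | [<- | []]] & [-> | ->]); simpl;
    [left | left | right; left | right; right; left]; now apply nf_eq.
Qed.

Lemma nf_mul_cancel v x y : nf_mul v x = nf_mul v y -> x = y.
Proof.
  intros H; apply (f_equal (nf_mul (nf_inv v))) in H.
  now rewrite !nf_mulA, nf_mulV, !nf_mul1 in H.
Qed.

Lemma rmul_inj v l l' : rmul v l = rmul v l' -> l = l'.
Proof. intros H%nf_mul_cancel; apply (f_equal (@proj1_sig _ _)) in H; now injection H. Qed.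

Lemma rmul_neq v l : rmul v l <> v.
Proof.
  intros H; assert (H1 : nf_mul v (letter_nf l) = nf_mul v nf_one) by (fold (rmul v l); rewrite H; now apply nf_eq).
  apply nf_mul_cancel, (f_equal (@proj1_sig _ _)) in H1; discriminate.
Qed.

Lemma rmul_rmul v l l' : rmul (rmul v l) l' = nf_mul v (nf_mul (letter_nf l) (letter_nf l')).
Proof. symmetry; apply nf_mulA. Qed.

Lemma rmul_AA v : rmul (rmul v A) A = v.
Proof. rewrite rmul_rmul; now apply nf_eq. Qed.

Lemma rmul_BB v : rmul (rmul v B) B = rmul v B'.
Proof. rewrite rmul_rmul; now apply nf_eq. Qed.

Lemma rmul_BB' v : rmul (rmul v B) B' = v.
Proof. rewrite rmul_rmul; now apply nf_eq. Qed.

Lemma rmul_B'B v : rmul (rmul v B') B = v.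
Proof. rewrite rmul_rmul; now apply nf_eq. Qed.

Lemma rmul_B'B' v : rmul (rmul v B') B' = rmul v B.
Proof. rewrite rmul_rmul; now apply nf_eq. Qed.

Lemma NoDup_rmul_neighbours v : NoDup [rmul v A; rmul v B; rmul v B'].
Proof.
  repeat constructor; simpl; intros Hin; repeat destruct Hin as [Hin | Hin];
    try apply rmul_inj in Hin; easy.
Qed.

Lemma NoDup_rmul_triangle v : NoDup [v; rmul v B; rmul v B'].
Proof.
  repeat constructor; simpl; intros Hin; repeat destruct Hin as [Hin | Hin];
    try apply rmul_inj in Hin; try apply rmul_neq in Hin; easy.
Qed.

(** * The a-edges are bridges *)

Definition has_suffix {T : Type} (u w : list T) : Prop := exists t, w = t ++ u.

Lemma has_suffix_cons {T : Type} (u w : list T) x : has_suffix u w -> has_suffix u (x :: w).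
Proof. intros [t ->]; now exists (x :: t). Qed.

Lemma has_suffix_cons_inv {T : Type} (x y : T) u w :
  has_suffix (y :: u) (x :: w) -> x = y /\ w = u \/ has_suffix (y :: u) w.
Proof.
  intros [[|z t] H]; simpl in H; injection H; intros; subst; [left | right; exists t]; auto.
Qed.

Lemma not_has_suffix_cons {T : Type} (x : T) u : ~ has_suffix (x :: u) u.
Proof. intros [t H]; apply (f_equal (@length _)) in H; rewrite length_app in H; simpl in H; lia. Qed.

Lemma mul_letter_shape l w :
  mul_letter l w = l :: w \/ (exists x, w = x :: mul_letter l w) \/
  exists x y w', w = x :: w' /\ mul_letter l w = y :: w' /\ y <> A.
Proof.
  destruct l, w as [|x w]; try destruct x; simpl;
    first [ now left | right; left; now eexists
          | right; right; do 3 eexists; repeat split; discriminate ].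
Qed.

(* Words are stored reversed, so [has_suffix (A :: p)] says that the word
   begins with p a; right multiplication only touches the last letter. *)
Lemma has_suffix_mul_letter l w p :
  ~ has_suffix (A :: p) w -> has_suffix (A :: p) (mul_letter l w) -> l = A /\ w = p.
Proof.
  intros Hw Hlw.
  destruct (mul_letter_shape l w) as [Heq | [[x Heq] | (x & y & w' & -> & Heq & Hy)]].
  - rewrite Heq in Hlw; destruct (has_suffix_cons_inv _ _ _ _ Hlw) as [? | ?]; tauto.
  - rewrite Heq in Hw; now apply has_suffix_cons with (x := x) in Hlw.
  - rewrite Heq in Hlw; destruct (has_suffix_cons_inv _ _ _ _ Hlw) as [[? _] | Hs]; [easy|].
    now apply has_suffix_cons with (x := x) in Hs.
Qed.

Lemma mul_letter_A_cases w : mul_letter A w = A :: w \/ w = A :: mul_letter A w.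
Proof. destruct w as [|[] w]; auto. Qed.

Section SpanningSubgraph.

Variable E : nf -> nf -> Prop.
Hypothesis E_sub : forall x y, E x y -> cay_adj Z2Z3 gens x y.
Hypothesis E_sym : forall x y, E x y -> E y x.
Hypothesis E_connected : connected E.

Lemma E_neighbours v y : E v y -> In y [rmul v A; rmul v B; rmul v B'].
Proof. intros Hvy; now apply cay_adj_rmul, E_sub. Qed.

Lemma a_edge_bridge v : proj1_sig (rmul v A) = A :: proj1_sig v -> E v (rmul v A).
Proof.
  intros Hva.
  apply (cut_edge E (fun x => ~ has_suffix (A :: proj1_sig v) (proj1_sig x)) _ _ v (rmul v A));
    auto using not_has_suffix_cons.
  - rewrite Hva; intros Hn; apply Hn; now exists [].
  - intros x y Hxy Hx Hy%NNPP.
    destruct (E_neighbours _ _ Hxy) as [<- | [<- | [<- | []]]];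
      destruct (has_suffix_mul_letter _ _ _ Hx Hy) as [Hl Hxv]; try discriminate;
      now rewrite (nf_eq x v Hxv).
Qed.

Lemma a_edge v : E v (rmul v A).
Proof.
  destruct (mul_letter_A_cases (proj1_sig v)) as [Hv | Hv]; [now apply a_edge_bridge|].
  apply E_sym; rewrite <- (rmul_AA v) at 2; apply a_edge_bridge.
  now rewrite rmul_AA.
Qed.

Lemma two_regular_triangle v : (forall x, has_degree E x 2) ->
  E v (rmul v B) <-> ~ E v (rmul v B').
Proof.
  intros Hd; split.
  - intros Hb Hb'.
    enough (3 <= 2) by lia.
    apply (has_degree_ge E v 2 _ (Hd v) (NoDup_rmul_neighbours v)).
    intros y [<- | [<- | [<- | []]]]; auto using a_edge.
  - intros Hb'; apply NNPP; intros Hb.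
    enough (2 <= 1) by lia.
    apply (has_degree_le E v 2 [rmul v A] (Hd v)).
    intros y Hy; destruct (E_neighbours _ _ Hy) as [<- | [<- | [<- | []]]]; simpl; tauto.
Qed.

(* Each vertex of the triangle v, vb, vb^-1 would meet exactly one of its
   three edges. *)
Lemma not_two_regular : ~ forall x, has_degree E x 2.
Proof.
  intros Hd.
  pose proof (two_regular_triangle nf_one Hd) as He.
  pose proof (two_regular_triangle (rmul nf_one B) Hd) as Hb.
  pose proof (two_regular_triangle (rmul nf_one B') Hd) as Hb'.
  rewrite rmul_BB, rmul_BB' in Hb; rewrite rmul_B'B, rmul_B'B' in Hb'.
  pose proof (E_sym (rmul nf_one B)) ; pose proof (E_sym (rmul nf_one B')).
  pose proof (E_sym nf_one); firstorder.
Qed.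

Lemma three_regular_has_cycle : (forall x, has_degree E x 3) -> has_cycle E.
Proof.
  intros Hd.
  assert (Hfull : forall v y, In y [rmul v A; rmul v B; rmul v B'] -> E v y)
    by (intros v; apply has_degree_full; auto using NoDup_rmul_neighbours, E_neighbours).
  exists nf_one, [rmul nf_one B; rmul nf_one B']; repeat split;
    auto using NoDup_rmul_triangle.
  - apply Hfull; simpl; auto.
  - rewrite <- rmul_BB; apply Hfull; simpl; auto.
  - simpl; rewrite <- (rmul_B'B nf_one) at 2; apply Hfull; simpl; auto.
Qed.

End SpanningSubgraph.

Theorem proposition5p9 :
  exists (G : group) (S : list G),
    infinite_group G /\ generates G S /\
    ~ exists E : G -> G -> Prop, regular_spanning_tree (cay_adj G S) E.
Proof.
  exists Z2Z3, gens; split; [apply Z2Z3_infinite | split; [apply Z2Z3_generated |]].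
  intros (E & Hsub & (Hsym & _ & Hcon & Hacyclic) & d & Hd).
  assert (Hd3 : d <= 3) by exact (has_degree_le E _ d _ (Hd nf_one) (E_neighbours E Hsub _)).
  assert (Hcases : d <= 1 \/ d = 2 \/ d = 3) by lia.
  destruct Hcases as [Hd1 | [-> | ->]].
  - destruct (connected_degree_le1 E d Hsym Hcon Hd Hd1 nf_one (letter_nf A) (letter_nf B))
      as [H | [H | H]]; apply (f_equal (@proj1_sig _ _)) in H; discriminate.
  - exact (not_two_regular E Hsub Hsym Hcon Hd).
  - exact (Hacyclic (three_regular_has_cycle E Hsub Hd)).
Qed.
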